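(* Let $\alpha>0$ and $t>2\pi$, and put $\tau=t/2\pi$. Then \[ S(\tau^\alpha,t)\le 2A\bigl(\tau^{1/2}+2\tau^{\alpha-1/2}\bigr), \] where $A=\frac{2}{\sqrt\pi}(1+\sqrt{1+3\pi/8})$.
   Context: $e(x)=e^{2\pi i x}$, $f(x)=\frac{t}{2\pi}\log x$, and for $X>0$, $S(X,t)=\sup_{0<Y\le X}\bigl|\sum_{X<n\le X+Y}e(f(n))\bigr|$ (sum over integers $n$). *)

From Stdlib Require Import Reals Lra Lia ZArith List.
Open Scope R_scope.

(* f(x) = (t / (2 pi)) log x, and e(x) = exp(2 pi i x) split into real and
   imaginary parts: e(f(n)) = cos(2 pi f(n)) + i sin(2 pi f(n)). *)
Definition fphase (t x : R) : R := t / (2 * PI) * ln x.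

(* The integers n with X < n <= X + Y are exactly
   n = floor(X) + 1 + k, for 0 <= k < floor(X+Y) - floor(X). *)
Definition Zfloor (x : R) : Z := (up x - 1)%Z.

Definition int_range (X Y : R) : list Z :=
  map (fun k => (Zfloor X + 1 + Z.of_nat k)%Z)
      (seq 0 (Z.to_nat (Zfloor (X + Y) - Zfloor X))).

Definition re_sum (t X Y : R) : R :=
  fold_right Rplus 0
    (map (fun n => cos (2 * PI * fphase t (IZR n))) (int_range X Y)).
Definition im_sum (t X Y : R) : R :=
  fold_right Rplus 0
    (map (fun n => sin (2 * PI * fphase t (IZR n))) (int_range X Y)).

Definition abs_exp_sum (t X Y : R) : R :=
  sqrt (Rsqr (re_sum t X Y) + Rsqr (im_sum t X Y)).

(* S(X,t) = sup_{0 < Y <= X} abs_exp_sum t X Y  (as a least upper bound;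
   the set is bounded by the number of terms, so the sup exists). *)
Definition S_set (X t : R) : R -> Prop :=
  fun s => exists Y, 0 < Y <= X /\ s = abs_exp_sum t X Y.

Definition A_const : R := 2 / sqrt PI * (1 + sqrt (1 + 3 * PI / 8)).

From Pilot Require Import Defs.
From Stdlib Require Import Reals Lra Lia List ZArith.
From Coquelicot Require Import Coquelicot.
Open Scope R_scope.

(* Write the integers of (X, X + Y] as n = n0 + j, all in (X, 2X], and put g(j) = τ log n.
   The slopes θ_j = g(j+1) - g(j) ≈ τ/n decrease by at least λ = τ/(2X)² at each step.
   By the Kusmin-Landau inequality, a run of consecutive j with θ_j in [k + d, k + 1 - d]
   contributes at most 2/sin(πd), while at most 2d/λ + 1 steps have θ_j within d of a
   given integer k. The θ_j sweep an interval of length about τ/(2X), so at most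
   τ/(2X) + 2 integers k occur. With d = 0.3 √τ/X the resulting bound is below
   5.4 (√τ + 2X/√τ) ≤ 2A (√τ + 2X/√τ) as soon as X ≥ 1.5 √τ; for smaller X the trivial
   bound X + 1 on the number of terms suffices. *)

Definition e2pi (x : R) : C := (cos (2 * PI * x), sin (2 * PI * x)).

Lemma Cmod_e2pi x : Cmod (e2pi x) = 1.
Proof.
  unfold Cmod, e2pi; simpl.
  pose proof (sin2_cos2 (2 * PI * x)) as E; unfold Rsqr in E.
  rewrite !Rmult_1_r, Rplus_comm, E. apply sqrt_1.
Qed.

Lemma e2pi_add x y : e2pi (x + y) = (e2pi x * e2pi y)%C.
Proof.
  unfold e2pi, Cmult; simpl. rewrite Rmult_plus_distr_l, cos_plus, sin_plus.
  f_equal; ring.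
Qed.

Lemma e2pi_IZR (z : Z) : e2pi (IZR z) = 1%C.
Proof.
  assert (Hsin : sin (PI * IZR z) = 0) by (apply sin_eq_0_1; exists z; ring).
  unfold e2pi, RtoC. replace (2 * PI * IZR z) with (2 * (PI * IZR z)) by ring.
  rewrite cos_2a_sin, sin_2a, Hsin. f_equal; ring.
Qed.

Lemma e2pi_add_IZR x (z : Z) : e2pi (x + IZR z) = e2pi x.
Proof. rewrite e2pi_add, e2pi_IZR. ring. Qed.

Fixpoint csum (f : nat -> C) (n : nat) : C :=
  match n with O => 0%C | S n => (csum f n + f n)%C end.

Lemma csum_ext f h n : (forall i, (i < n)%nat -> f i = h i) -> csum f n = csum h n.
Proof.
  induction n as [|n IH]; intros Efh; simpl; auto.
  rewrite IH, Efh; auto.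
Qed.

Lemma csum_add f m n : csum f (m + n) = (csum f m + csum (fun i => f (m + i)%nat) n)%C.
Proof.
  induction n as [|n IH]; simpl.
  - rewrite Nat.add_0_r. ring.
  - rewrite Nat.add_succ_r. simpl. rewrite IH. ring.
Qed.

Lemma Cmod_csum_le f n :
  (forall i, (i < n)%nat -> Cmod (f i) <= 1) -> Cmod (csum f n) <= INR n.
Proof.
  induction n as [|n IH]; intros Hf; simpl csum.
  - rewrite Cmod_0. simpl; lra.
  - rewrite S_INR. eapply Rle_trans; [apply Cmod_triangle|].
    assert (Cmod (csum f n) <= INR n) by (apply IH; auto).
    assert (Cmod (f n) <= 1) by auto. lra.
Qed.

Lemma Cmod_csum_e2pi_le g n : Cmod (csum (fun i => e2pi (g i)) n) <= INR n.
Proof. apply Cmod_csum_le. intros i _. rewrite Cmod_e2pi. lra. Qed.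

Definition fdiff (g : nat -> R) (i : nat) : R := g (S i) - g i.

Lemma fdiff_shift g p i : fdiff (fun j => g (p + j)%nat) i = fdiff g (p + i).
Proof. unfold fdiff. rewrite Nat.add_succ_r. reflexivity. Qed.

Definition cot (x : R) : R := cos x / sin x.

(* 1 / (e(θ) - 1) = -1/2 - (i/2) cot(πθ). *)
Definition inv_e2pi_sub1 (theta : R) : C := (-1/2, - cot (PI * theta) / 2).

Lemma inv_e2pi_sub1_spec theta :
  sin (PI * theta) <> 0 -> (inv_e2pi_sub1 theta * (e2pi theta - 1))%C = 1%C.
Proof.
  intros Hs. unfold inv_e2pi_sub1, e2pi, cot, Cmult, Cminus, Cplus, Copp, RtoC; simpl.
  replace (2 * PI * theta) with (2 * (PI * theta)) by ring.
  rewrite cos_2a_sin, sin_2a.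
  pose proof (sin2_cos2 (PI * theta)) as E; unfold Rsqr in E.
  f_equal; field_simplify; lra.
Qed.

Lemma Cmod_inv_e2pi_sub1 theta :
  0 < sin (PI * theta) -> Cmod (inv_e2pi_sub1 theta) = 1 / (2 * sin (PI * theta)).
Proof.
  intros Hs. unfold Cmod, inv_e2pi_sub1, cot; simpl.
  pose proof (sin2_cos2 (PI * theta)) as E; unfold Rsqr in E.
  rewrite <- (sqrt_pow2 (1 / (2 * sin (PI * theta)))).
  - f_equal. assert (sin (PI * theta) <> 0) by lra.
    rewrite !Rmult_1_r. field_simplify; auto. rewrite <- E. field; auto.
  - apply Rlt_le, Rdiv_lt_0_compat; lra.
Qed.

Lemma Cmod_inv_e2pi_sub1_sub a b :
  Cmod (inv_e2pi_sub1 a - inv_e2pi_sub1 b)%C = Rabs (cot (PI * a) - cot (PI * b)) / 2.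
Proof.
  unfold Cmod, inv_e2pi_sub1, Cminus, Cplus, Copp; simpl.
  replace (Rabs (cot (PI * a) - cot (PI * b)) / 2)
    with (Rabs ((cot (PI * a) - cot (PI * b)) / 2))
    by (rewrite Rabs_div, (Rabs_right 2); lra).
  rewrite <- sqrt_Rsqr_abs. f_equal. unfold Rsqr. field.
Qed.

Lemma sin_PI_pos t : 0 < t < 1 -> 0 < sin (PI * t).
Proof. intros. pose proof PI_RGT_0. apply sin_gt_0; nra. Qed.

Lemma sin_PI_le d t : d <= t <= 1 - d -> 0 < d <= 1/2 -> sin (PI * d) <= sin (PI * t).
Proof.
  intros Ht Hd. pose proof PI_RGT_0.
  destruct (Rle_dec t (1/2)).
  - apply sin_incr_1; nra.
  - rewrite <- (sin_PI_x (PI * t)). apply sin_incr_1; nra.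
Qed.

Lemma cot_PI_antitone a b : 0 < b -> b <= a -> a < 1 -> cot (PI * a) <= cot (PI * b).
Proof.
  intros Hb Hab Ha. pose proof PI_RGT_0.
  assert (sa : 0 < sin (PI * a)) by (apply sin_PI_pos; lra).
  assert (sb : 0 < sin (PI * b)) by (apply sin_PI_pos; lra).
  assert (E : cot (PI * b) - cot (PI * a) = sin (PI * a - PI * b) / (sin (PI * a) * sin (PI * b)))
    by (unfold cot; rewrite sin_minus; field; lra).
  assert (0 <= sin (PI * a - PI * b)) by (apply sin_ge_0; nra).
  assert (0 <= sin (PI * a - PI * b) / (sin (PI * a) * sin (PI * b)))
    by (apply Rdiv_le_0_compat; nra).
  lra.
Qed.

Lemma Rabs_cot_PI_le d t :
  d <= t <= 1 - d -> 0 < d <= 1/2 -> Rabs (cot (PI * t)) <= 1 / sin (PI * d).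
Proof.
  intros Ht Hd.
  pose proof (sin_PI_le d t Ht Hd). pose proof (sin_PI_pos d ltac:(lra)).
  unfold cot. rewrite Rabs_div by lra. rewrite (Rabs_right (sin _)) by lra.
  unfold Rdiv. rewrite Rmult_1_l.
  apply Rle_trans with (/ sin (PI * t)).
  - rewrite <- (Rmult_1_l (/ sin (PI * t))) at 2.
    apply Rmult_le_compat_r; [left; apply Rinv_0_lt_compat; lra|].
    pose proof (COS_bound (PI * t)). apply Rabs_le; lra.
  - apply Rinv_le_contravar; lra.
Qed.

(* Kusmin-Landau: by Abel summation with the coefficients 1 / (e(θ_i) - 1), whose
   imaginary parts -cot(πθ_i)/2 are monotone when θ_i is. *)
Section KusminLandau.

Variables (g : nat -> R) (d : R) (m : nat).
Hypothesis d_range : 0 < d <= 1/2.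
Hypothesis fdiff_range : forall i, (i < m)%nat -> d <= fdiff g i <= 1 - d.
Hypothesis fdiff_nonincreasing : forall i, (S i < m)%nat -> fdiff g (S i) <= fdiff g i.

Let U i := e2pi (g i).
Let c i := inv_e2pi_sub1 (fdiff g i).

Let Cmod_U i : Cmod (U i) = 1 := Cmod_e2pi (g i).

Let coef_mul_succ i : (i < m)%nat -> (c i * U (S i))%C = (U i + c i * U i)%C.
Proof.
  intros Hi. pose proof (sin_PI_le d _ (fdiff_range i Hi) d_range).
  pose proof (sin_PI_pos d ltac:(lra)).
  assert (Hg : g (S i) = g i + fdiff g i) by (unfold fdiff; ring).
  unfold U, c. rewrite Hg, e2pi_add.
  transitivity (e2pi (g i) * (inv_e2pi_sub1 (fdiff g i) * (e2pi (fdiff g i) - 1))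
                + inv_e2pi_sub1 (fdiff g i) * e2pi (g i))%C.
  - ring.
  - rewrite inv_e2pi_sub1_spec by lra. ring.
Qed.

Let Cmod_coef_le i : (i < m)%nat -> Cmod (c i) <= 1 / (2 * sin (PI * d)).
Proof.
  intros Hi. pose proof (sin_PI_le d _ (fdiff_range i Hi) d_range).
  pose proof (sin_PI_pos d ltac:(lra)).
  unfold c. rewrite Cmod_inv_e2pi_sub1 by lra.
  unfold Rdiv. rewrite !Rmult_1_l. apply Rinv_le_contravar; lra.
Qed.

Lemma abel_summation_bound n : (S n <= m)%nat ->
  Cmod (csum U (S n) - c n * U (S n))%C
  <= 1 / (2 * sin (PI * d)) + (cot (PI * fdiff g n) - cot (PI * fdiff g 0)) / 2.
Proof.
  induction n as [|n IH]; intros Hn.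
  - replace (csum U 1 - c 0%nat * U 1%nat)%C with (- (c 0%nat * U 0%nat))%C.
    + rewrite Cmod_opp, Cmod_mult, Cmod_U.
      pose proof (Cmod_coef_le 0 ltac:(lia)). lra.
    + simpl. rewrite coef_mul_succ by lia. ring.
  - replace (csum U (S (S n)) - c (S n) * U (S (S n)))%C
      with ((csum U (S n) - c n * U (S n)) + (c n - c (S n)) * U (S n))%C.
    + eapply Rle_trans; [apply Cmod_triangle|].
      rewrite Cmod_mult, Cmod_U. unfold c at 2 3. rewrite Cmod_inv_e2pi_sub1_sub.
      specialize (IH ltac:(lia)).
      assert (cot (PI * fdiff g n) <= cot (PI * fdiff g (S n))).
      { pose proof (fdiff_range n ltac:(lia)). pose proof (fdiff_range (S n) ltac:(lia)).
        apply cot_PI_antitone; auto; lra. }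
      rewrite Rabs_left1 by lra. lra.
    + simpl. rewrite (coef_mul_succ (S n)) by lia. ring.
Qed.

Theorem kusmin_landau : Cmod (csum U m) <= 2 / sin (PI * d).
Proof.
  pose proof (sin_PI_pos d ltac:(lra)) as Hs.
  destruct (Nat.eq_0_gt_0_cases m) as [Hm|Hm].
  - rewrite Hm. simpl. rewrite Cmod_0. apply Rlt_le, Rdiv_lt_0_compat; lra.
  - set (n := pred m). replace m with (S n) by (unfold n; lia).
    replace (csum U (S n)) with ((csum U (S n) - c n * U (S n)) + c n * U (S n))%C by ring.
    eapply Rle_trans; [apply Cmod_triangle|].
    rewrite Cmod_mult, Cmod_U.
    pose proof (abel_summation_bound n ltac:(lia)).
    pose proof (Cmod_coef_le n ltac:(lia)).
    pose proof (Rabs_cot_PI_le d _ (fdiff_range n ltac:(lia)) d_range) as Hcot_n.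
    pose proof (Rabs_cot_PI_le d _ (fdiff_range 0 ltac:(lia)) d_range) as Hcot_0.
    apply Rabs_le_between in Hcot_n. apply Rabs_le_between in Hcot_0.
    assert (1 / (2 * sin (PI * d)) = (1 / sin (PI * d)) / 2) by (field; lra).
    assert (2 / sin (PI * d) = 2 * (1 / sin (PI * d))) by (field; lra).
    lra.
Qed.

End KusminLandau.

Lemma kusmin_landau_shift g d m (k : Z) :
  0 < d <= 1/2 ->
  (forall i, (i < m)%nat -> IZR k + d <= fdiff g i <= IZR k + 1 - d) ->
  (forall i, (S i < m)%nat -> fdiff g (S i) <= fdiff g i) ->
  Cmod (csum (fun i => e2pi (g i)) m) <= 2 / sin (PI * d).
Proof.
  intros Hd Hrange Hanti.
  set (h i := g i + IZR (- k * Z.of_nat i)).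
  assert (Hfd : forall i, fdiff h i = fdiff g i - IZR k).
  { intros i. unfold fdiff, h. rewrite !mult_IZR, opp_IZR, <- !INR_IZR_INZ, S_INR. ring. }
  rewrite (csum_ext _ (fun i => e2pi (h i))) by (intros; unfold h; rewrite e2pi_add_IZR; auto).
  apply kusmin_landau; auto.
  - intros i Hi. rewrite Hfd. specialize (Hrange i Hi). lra.
  - intros i Hi. rewrite !Hfd. specialize (Hanti i Hi). lra.
Qed.

Lemma exists_maximal_prefix (P : nat -> Prop) (Pdec : forall i, {P i} + {~ P i}) m :
  exists k, (k <= m)%nat /\ (forall i, (i < k)%nat -> P i) /\ ((k < m)%nat -> ~ P k).
Proof.
  induction m as [|m (k & Hkm & HP & Hk)].
  - exists 0%nat. repeat split; intros; lia.
  - destruct (Nat.eq_dec k m) as [->|Hne].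
    + destruct (Pdec m) as [Pm|nPm].
      * exists (S m). repeat split; [lia| |lia].
        intros i Hi. destruct (Nat.eq_dec i m) as [->|]; auto. apply HP; lia.
      * exists m. repeat split; auto.
    + exists k. repeat split; auto; intros; apply Hk; lia.
Qed.

Definition strongly_concave (lam : R) (g : nat -> R) (m : nat) : Prop :=
  forall i, (S i < m)%nat -> lam <= fdiff g i - fdiff g (S i).

Lemma strongly_concave_shift lam g m p :
  strongly_concave lam g m -> strongly_concave lam (fun i => g (p + i)%nat) (m - p).
Proof.
  intros Hg i Hi. rewrite !fdiff_shift, Nat.add_succ_r. apply Hg. lia.
Qed.

Lemma fdiff_sub_ge lam g m p n : strongly_concave lam g m -> (p + n < m)%nat ->
  INR n * lam <= fdiff g p - fdiff g (p + n).
Proof.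
  intros Hg. induction n as [|n IH]; intros Hn.
  - rewrite Nat.add_0_r. simpl. lra.
  - specialize (IH ltac:(lia)). specialize (Hg (p + n)%nat ltac:(lia)).
    rewrite Nat.add_succ_r, S_INR. lra.
Qed.

Lemma fdiff_antitone lam g m i j : 0 <= lam -> strongly_concave lam g m ->
  (i <= j)%nat -> (j < m)%nat -> fdiff g j <= fdiff g i.
Proof.
  intros Hlam Hg Hij Hj. replace j with (i + (j - i))%nat by lia.
  pose proof (fdiff_sub_ge lam g m i (j - i) Hg ltac:(lia)).
  pose proof (pos_INR (j - i)). nra.
Qed.

Section Blocks.

Variables lam d : R.
Hypothesis lam_pos : 0 < lam.
Hypothesis d_range : 0 < d <= 1/2.

Definition block_bound : R := 2 * d / lam + 1 + 2 / sin (PI * d).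

Lemma block_bound_ge0 : 0 <= block_bound.
Proof.
  unfold block_bound. pose proof (sin_PI_pos d ltac:(lra)).
  assert (0 <= 2 * d / lam) by (apply Rdiv_le_0_compat; lra).
  assert (0 <= 2 / sin (PI * d)) by (apply Rdiv_le_0_compat; lra).
  lra.
Qed.

Lemma count_near_integer_le g m (k : Z) : strongly_concave lam g m ->
  (forall i, (i < m)%nat -> IZR k - d <= fdiff g i < IZR k + d) ->
  INR m <= 2 * d / lam + 1.
Proof.
  intros Hg Hnear. destruct m as [|n].
  - simpl. assert (0 <= 2 * d / lam) by (apply Rdiv_le_0_compat; lra). lra.
  - pose proof (fdiff_sub_ge lam g (S n) 0 n Hg ltac:(lia)) as Hdrop.
    pose proof (Hnear 0%nat ltac:(lia)). pose proof (Hnear n ltac:(lia)).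
    assert (INR n <= 2 * d / lam).
    { apply Rmult_le_reg_r with lam; auto.
      unfold Rdiv. rewrite Rmult_assoc, Rinv_l by lra. simpl in Hdrop. lra. }
    rewrite S_INR. lra.
Qed.

Lemma csum_block_le g m (k : Z) : strongly_concave lam g m ->
  (forall i, (i < m)%nat -> IZR k - d <= fdiff g i < IZR k + 1 - d) ->
  Cmod (csum (fun i => e2pi (g i)) m) <= block_bound.
Proof.
  intros Hg Hblock.
  destruct (exists_maximal_prefix (fun i => IZR k + d <= fdiff g i) (fun i => Rle_dec _ _) m)
    as (m1 & Hm1 & Hfar & Hnear_start).
  replace m with (m1 + (m - m1))%nat by lia. rewrite csum_add.
  eapply Rle_trans; [apply Cmod_triangle|].
  assert (Cmod (csum (fun i => e2pi (g i)) m1) <= 2 / sin (PI * d)).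
  { apply (kusmin_landau_shift g d m1 k d_range).
    - intros i Hi. specialize (Hblock i ltac:(lia)). split; [apply Hfar; auto | lra].
    - intros i Hi. apply (fdiff_antitone lam g m); [lra | exact Hg | lia | lia]. }
  assert (Cmod (csum (fun i => e2pi (g (m1 + i)%nat)) (m - m1)) <= 2 * d / lam + 1).
  { eapply Rle_trans; [apply Cmod_csum_e2pi_le|].
    apply (count_near_integer_le _ _ k (strongly_concave_shift lam g m m1 Hg)).
    intros i Hi. rewrite fdiff_shift. specialize (Hblock (m1 + i)%nat ltac:(lia)).
    assert (fdiff g (m1 + i) <= fdiff g m1)
      by (apply (fdiff_antitone lam g m); [lra | exact Hg | lia | lia]).
    assert (~ IZR k + d <= fdiff g m1) by (apply Hnear_start; lia).
    lra. }
  unfold block_bound. lra.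
Qed.

Lemma csum_blocks_le m : forall g, strongly_concave lam g m -> (1 <= m)%nat ->
  Cmod (csum (fun i => e2pi (g i)) m)
  <= (IZR (Zfloor (fdiff g 0 + d)) - IZR (Zfloor (fdiff g (m - 1) + d)) + 1) * block_bound.
Proof.
  induction m as [m IH] using (well_founded_induction Wf_nat.lt_wf). intros g Hg Hm.
  (* The maximal prefix with θ_i >= k - d is one block; after it ⌊θ_i + d⌋ <= k - 1. *)
  set (k := Zfloor (fdiff g 0 + d)).
  pose proof (Zfloor_bound (fdiff g 0 + d)) as Hk. fold k in Hk.
  pose proof block_bound_ge0.
  assert (Hfloor_antitone : forall i j, (i <= j)%nat -> (j < m)%nat ->
            IZR (Zfloor (fdiff g j + d)) <= IZR (Zfloor (fdiff g i + d))).
  { intros i j Hij Hj. apply IZR_le, Zfloor_le.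
    pose proof (fdiff_antitone lam g m i j ltac:(lra) Hg Hij Hj). lra. }
  destruct (exists_maximal_prefix (fun i => IZR k - d <= fdiff g i) (fun i => Rle_dec _ _) m)
    as (m1 & Hm1 & Hin & Hout).
  assert (Hblock : Cmod (csum (fun i => e2pi (g i)) m1) <= block_bound).
  { apply (csum_block_le g m1 k).
    - intros i Hi. apply Hg. lia.
    - intros i Hi. split; [apply Hin; auto|].
      assert (fdiff g i <= fdiff g 0)
        by (apply (fdiff_antitone lam g m); [lra | exact Hg | lia | lia]).
      lra. }
  destruct (Nat.eq_dec m1 m) as [->|Hne].
  - pose proof (Hfloor_antitone 0 (m - 1) ltac:(lia) ltac:(lia))%nat as Hlast.
    fold k in Hlast. nra.
  - assert (Hm1_pos : (1 <= m1)%nat).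
    { destruct m1; [|lia]. exfalso. apply Hout; [lia|]. lra. }
    replace m with (m1 + (m - m1))%nat by lia. rewrite csum_add.
    eapply Rle_trans; [apply Cmod_triangle|].
    specialize (IH (m - m1)%nat ltac:(lia) (fun i => g (m1 + i)%nat)
                  (strongly_concave_shift lam g m m1 Hg) ltac:(lia)).
    rewrite !fdiff_shift, Nat.add_0_r in IH.
    replace (m1 + (m - m1 - 1))%nat with (m1 + (m - m1) - 1)%nat in IH by lia.
    assert (IZR (Zfloor (fdiff g m1 + d)) <= IZR k - 1).
    { rewrite <- minus_IZR. apply IZR_le.
      assert (~ IZR k - d <= fdiff g m1) by (apply Hout; lia).
      pose proof (Zfloor_bound (fdiff g m1 + d)).
      assert (IZR (Zfloor (fdiff g m1 + d)) < IZR k) as Hlt by lra.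
      apply lt_IZR in Hlt. lia. }
    nra.
Qed.

Theorem csum_strongly_concave_le g m : strongly_concave lam g m -> (1 <= m)%nat ->
  Cmod (csum (fun i => e2pi (g i)) m) <= (fdiff g 0 - fdiff g (m - 1) + 2) * block_bound.
Proof.
  intros Hg Hm. eapply Rle_trans; [apply (csum_blocks_le m g Hg Hm)|].
  apply Rmult_le_compat_r; [apply block_bound_ge0|].
  pose proof (Zfloor_bound (fdiff g 0 + d)). pose proof (Zfloor_bound (fdiff g (m - 1) + d)).
  lra.
Qed.

End Blocks.

Lemma ln_le_sub1 x : 0 < x -> ln x <= x - 1.
Proof.
  intros Hx. pose proof (exp_ineq1_le (ln x)) as Hexp.
  rewrite exp_ln in Hexp by auto. lra.
Qed.

Lemma ln_succ_sub_le x : 0 < x -> ln (x + 1) - ln x <= 1 / x.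
Proof.
  intros Hx. rewrite <- ln_div by lra.
  pose proof (ln_le_sub1 ((x + 1) / x) ltac:(apply Rdiv_lt_0_compat; lra)) as Hln.
  replace ((x + 1) / x - 1) with (1 / x) in Hln by (field; lra). exact Hln.
Qed.

Lemma ln_succ_sub_ge x : 0 < x -> 1 / (x + 1) <= ln (x + 1) - ln x.
Proof.
  intros Hx. pose proof (ln_le_sub1 (x / (x + 1)) ltac:(apply Rdiv_lt_0_compat; lra)) as Hln.
  rewrite ln_div in Hln by lra.
  replace (x / (x + 1) - 1) with (- (1 / (x + 1))) in Hln by (field; lra). lra.
Qed.

Lemma ln_second_diff_ge x : 0 < x ->
  1 / ((x + 1) * (x + 1)) <= 2 * ln (x + 1) - ln x - ln (x + 2).
Proof.
  intros Hx.
  assert (Hpos : 0 < x * (x + 2) / ((x + 1) * (x + 1))) by (apply Rdiv_lt_0_compat; nra).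
  pose proof (ln_le_sub1 _ Hpos) as Hln.
  rewrite ln_div, !ln_mult in Hln by nra.
  replace (x * (x + 2) / ((x + 1) * (x + 1)) - 1) with (- (1 / ((x + 1) * (x + 1)))) in Hln
    by (field; lra).
  lra.
Qed.

Definition log_phase (tau a : R) (j : nat) : R := tau * ln (a + INR j).

Lemma fdiff_log_phase tau a j :
  fdiff (log_phase tau a) j = tau * (ln (a + INR j + 1) - ln (a + INR j)).
Proof. unfold fdiff, log_phase. rewrite S_INR, Rplus_assoc. ring. Qed.

Lemma log_phase_strongly_concave tau a L m : 0 <= tau -> 0 < a -> a + INR m - 1 <= L ->
  strongly_concave (tau / (L * L)) (log_phase tau a) m.
Proof.
  intros Htau Ha HL i Hi. rewrite !fdiff_log_phase, S_INR.
  assert (Hlast : INR (S (S i)) <= INR m) by (apply le_INR; lia).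
  rewrite !S_INR in Hlast. pose proof (pos_INR i).
  set (x := a + INR i).
  replace (a + (INR i + 1) + 1) with (x + 2) by (unfold x; ring).
  replace (a + (INR i + 1)) with (x + 1) by (unfold x; ring).
  pose proof (ln_second_diff_ge x ltac:(unfold x; lra)).
  assert (1 / (L * L) <= 1 / ((x + 1) * (x + 1))).
  { apply Rmult_le_compat_l; [lra|]. apply Rinv_le_contravar; unfold x in *; nra. }
  replace (tau * (ln (x + 1) - ln x) - tau * (ln (x + 2) - ln (x + 1)))
    with (tau * (2 * ln (x + 1) - ln x - ln (x + 2))) by ring.
  unfold Rdiv. rewrite <- (Rmult_1_l (/ (L * L))). apply Rmult_le_compat_l; lra.
Qed.

Lemma log_phase_fdiff_spread tau a m : 0 <= tau -> 0 < a -> (1 <= m)%nat ->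
  fdiff (log_phase tau a) 0 - fdiff (log_phase tau a) (m - 1) <= tau / a - tau / (a + INR m).
Proof.
  intros Htau Ha Hm. rewrite !fdiff_log_phase, minus_INR by lia. simpl INR.
  pose proof (pos_INR m). assert (1 <= INR m) by (apply (le_INR 1); lia).
  pose proof (ln_succ_sub_le (a + 0) ltac:(lra)).
  pose proof (ln_succ_sub_ge (a + (INR m - 1)) ltac:(lra)).
  replace (a + (INR m - 1) + 1) with (a + INR m) in * by ring.
  unfold Rdiv in *. rewrite Rplus_0_r in *. rewrite Rmult_1_l in *. nra.
Qed.

Lemma fold_right_Rplus_map_seq_S (h : nat -> R) n :
  fold_right Rplus 0 (map h (seq 0 (S n))) = fold_right Rplus 0 (map h (seq 0 n)) + h n.
Proof.
  rewrite seq_S, map_app, fold_right_app. simpl.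
  generalize (h n). induction (map h (seq 0 n)) as [|x l IH]; intros y; simpl.
  - ring.
  - rewrite IH. ring.
Qed.

Lemma fst_csum f n : fst (csum f n) = fold_right Rplus 0 (map (fun i => fst (f i)) (seq 0 n)).
Proof. induction n as [|n IH]; auto. rewrite fold_right_Rplus_map_seq_S, <- IH. auto. Qed.

Lemma snd_csum f n : snd (csum f n) = fold_right Rplus 0 (map (fun i => snd (f i)) (seq 0 n)).
Proof. induction n as [|n IH]; auto. rewrite fold_right_Rplus_map_seq_S, <- IH. auto. Qed.

Lemma abs_exp_sum_eq t X Y :
  abs_exp_sum t X Y
  = Cmod (csum (fun j => e2pi (log_phase (t / (2 * PI)) (IZR (Zfloor X + 1)) j))
               (Z.to_nat (Zfloor (X + Y) - Zfloor X))).
Proof.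
  (* [Defs.Zfloor] is convertible to Stdlib's [Zfloor]. *)
  unfold abs_exp_sum, re_sum, im_sum, int_range, Cmod. rewrite fst_csum, snd_csum, !map_map.
  assert (Hpt : forall k, 2 * PI * fphase t (IZR (Defs.Zfloor X + 1 + Z.of_nat k))
                          = 2 * PI * log_phase (t / (2 * PI)) (IZR (Zfloor X + 1)) k).
  { intros k. unfold fphase, log_phase. rewrite plus_IZR, <- INR_IZR_INZ. reflexivity. }
  unfold Rsqr. simpl. rewrite !Rmult_1_r.
  f_equal; f_equal; f_equal; f_equal; apply map_ext; intros k; rewrite Hpt; reflexivity.
Qed.

Lemma INR_count_int_range X Y : 0 <= Y ->
  INR (Z.to_nat (Zfloor (X + Y) - Zfloor X)) = IZR (Zfloor (X + Y)) - IZR (Zfloor X).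
Proof.
  intros HY. rewrite INR_IZR_INZ, Z2Nat.id, minus_IZR; auto.
  pose proof (Zfloor_le X (X + Y) ltac:(lra)). lia.
Qed.

Lemma PI_ge_314 : 314 / 100 <= PI.
Proof.
  destruct (PI_2_3_7_ineq 1) as [H _].
  unfold sum_f_R0, tg_alt, PI_2_3_7_tg, Ratan_seq in H. simpl in H. lra.
Qed.

Lemma PI_le_315 : PI <= 315 / 100.
Proof.
  destruct (PI_2_3_7_ineq 1) as [_ H].
  unfold sum_f_R0, tg_alt, PI_2_3_7_tg, Ratan_seq in H. simpl in H. lra.
Qed.

Lemma sin_PI_mul_ge d : 0 < d <= 1/5 -> 29/10 * d <= sin (PI * d).
Proof.
  intros Hd. pose proof PI_ge_314. pose proof PI_le_315.
  set (x := PI * d).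
  assert (Hx : 0 < x <= 63/100) by (unfold x; nra).
  destruct (sin_bound x 0 ltac:(lra) ltac:(lra)) as [Hsin _].
  unfold sin_approx, sin_term in Hsin. simpl in Hsin.
  assert (x * x <= 4/10) by nra.
  unfold x in *. nra.
Qed.

Lemma A_const_ge : 27/10 <= A_const.
Proof.
  unfold A_const. pose proof PI_ge_314. pose proof PI_le_315.
  assert (sqrt PI <= 18/10) by (rewrite <- (sqrt_square (18/10)) by lra; apply sqrt_le_1; lra).
  assert (0 < sqrt PI) by (apply sqrt_lt_R0; lra).
  assert (145/100 <= sqrt (1 + 3 * PI / 8))
    by (rewrite <- (sqrt_square (145/100)) by lra; apply sqrt_le_1; lra).
  assert (2 / sqrt PI >= 2 / (18/10))
    by (apply Rle_ge; unfold Rdiv; apply Rmult_le_compat_l; [lra|apply Rinv_le_contravar; lra]).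
  nra.
Qed.

(* With u = X/√τ and λ = 1/(4u²), the margin d = 3/(10u) balances 2d/λ = 12u/5
   against 2/sin(πd) <= 5u/2. *)
Lemma slope_margin_range u : 3/2 <= u -> 0 < 3/10 / u <= 1/5.
Proof.
  intros Hu. assert (/ u <= / (3/2)) by (apply Rinv_le_contravar; lra).
  assert (0 < / u) by (apply Rinv_0_lt_compat; lra).
  replace (/ (3/2)) with (2/3) in * by field. unfold Rdiv. lra.
Qed.

Lemma block_bound_le u : 3/2 <= u ->
  block_bound (1 / (4 * (u * u))) (3/10 / u) <= 49/10 * u + 1.
Proof.
  intros Hu. unfold block_bound. pose proof (slope_margin_range u Hu) as Hd.
  pose proof (sin_PI_mul_ge _ Hd).
  assert (2 * (3/10 / u) / (1 / (4 * (u * u))) = 12/5 * u) by (field; lra).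
  assert (2 / sin (PI * (3/10 / u)) <= 2 / (29/10 * (3/10 / u))).
  { unfold Rdiv at 1 2. apply Rmult_le_compat_l; [lra|]. apply Rinv_le_contravar; [nra|lra]. }
  assert (2 / (29/10 * (3/10 / u)) <= 5/2 * u) by (apply Rmult_le_reg_r with (87/100); [lra|];
    field_simplify; lra).
  lra.
Qed.

Lemma large_case_arith r u : 1 < r -> 3/2 <= u ->
  (r / (2 * u) + 1 / (4 * (u * u)) + 2) * (49/10 * u + 1) <= 27/5 * (r + 2 * u).
Proof.
  intros Hr Hu.
  assert (E : (r / (2 * u) + 1 / (4 * (u * u)) + 2) * (49/10 * u + 1)
              = 49/20 * r + r / (2 * u) + 49 / (40 * u) + 1 / (4 * (u * u)) + 98/10 * u + 2)
    by (field; lra).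
  rewrite E.
  assert (r / (2 * u) <= r / 3)
    by (apply Rmult_le_compat_l; [lra|apply Rinv_le_contravar; lra]).
  assert (49 / (40 * u) <= 49/60)
    by (unfold Rdiv; apply Rmult_le_compat_l; [lra|apply Rinv_le_contravar; lra]).
  assert (1 / (4 * (u * u)) <= 1/9)
    by (unfold Rdiv; apply Rmult_le_compat_l; [lra|apply Rinv_le_contravar; nra]).
  lra.
Qed.

Lemma inv_sub_inv_le x : 0 < x -> 1 / x - 1 / (2 * x + 1) <= 1 / (2 * x) + 1 / (4 * (x * x)).
Proof.
  intros Hx.
  assert (E : 1 / (2 * x) + 1 / (4 * (x * x)) - (1 / x - 1 / (2 * x + 1))
              = 1 / (4 * (x * x) * (2 * x + 1))) by (field; lra).
  assert (0 <= 1 / (4 * (x * x) * (2 * x + 1))) by (apply Rdiv_le_0_compat; nra).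
  lra.
Qed.

Lemma log_phase_fdiff_spread_le tau X a N :
  0 <= tau -> 0 < X < a -> a + INR N - 1 <= 2 * X -> (1 <= N)%nat ->
  fdiff (log_phase tau a) 0 - fdiff (log_phase tau a) (N - 1)
  <= tau / (2 * X) + tau / (4 * (X * X)).
Proof.
  intros Htau HXa HaN HN. pose proof (pos_INR N).
  eapply Rle_trans; [apply log_phase_fdiff_spread; [lra | lra | exact HN]|].
  assert (tau / a <= tau / X)
    by (unfold Rdiv; apply Rmult_le_compat_l; [lra|apply Rinv_le_contravar; lra]).
  assert (tau / (2 * X + 1) <= tau / (a + INR N))
    by (unfold Rdiv; apply Rmult_le_compat_l; [lra|apply Rinv_le_contravar; lra]).
  pose proof (Rmult_le_compat_l tau _ _ Htau (inv_sub_inv_le X ltac:(lra))) as Hinv.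
  replace (tau * (1 / X - 1 / (2 * X + 1))) with (tau / X - tau / (2 * X + 1)) in Hinv
    by (field; lra).
  replace (tau * (1 / (2 * X) + 1 / (4 * (X * X)))) with (tau / (2 * X) + tau / (4 * (X * X)))
    in Hinv by (field; lra).
  lra.
Qed.

Lemma csum_log_phase_le tau X a N :
  1 < tau -> 3/2 * sqrt tau <= X -> X < a -> a + INR N - 1 <= 2 * X -> (1 <= N)%nat ->
  Cmod (csum (fun j => e2pi (log_phase tau a j)) N) <= 27/5 * (sqrt tau + 2 * (X / sqrt tau)).
Proof.
  intros Htau HX Ha HaN HN.
  set (r := sqrt tau) in *.
  assert (Hr : 1 < r) by (unfold r; rewrite <- sqrt_1; apply sqrt_lt_1; lra).
  assert (Hrr : tau = r * r) by (unfold r; rewrite sqrt_sqrt; lra).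
  set (u := X / r).
  assert (HXu : X = u * r) by (unfold u; field; lra).
  assert (Hu : 3/2 <= u) by nra.
  assert (Hconc : strongly_concave (1 / (4 * (u * u))) (log_phase tau a) N).
  { replace (1 / (4 * (u * u))) with (tau / (2 * X * (2 * X))) by (rewrite Hrr, HXu; field; lra).
    apply log_phase_strongly_concave; lra. }
  assert (Hspread : fdiff (log_phase tau a) 0 - fdiff (log_phase tau a) (N - 1)
                    <= r / (2 * u) + 1 / (4 * (u * u))).
  { replace (r / (2 * u) + 1 / (4 * (u * u))) with (tau / (2 * X) + tau / (4 * (X * X)))
      by (rewrite Hrr, HXu; field; lra).
    apply log_phase_fdiff_spread_le; auto; lra. }
  assert (Hlam : 0 < 1 / (4 * (u * u))) by (apply Rdiv_lt_0_compat; nra).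
  pose proof (slope_margin_range u Hu) as Hd.
  pose proof (fdiff_antitone _ _ _ 0 (N - 1) (Rlt_le _ _ Hlam) Hconc ltac:(lia) ltac:(lia)).
  eapply Rle_trans; [apply (csum_strongly_concave_le _ (3/10 / u) Hlam); auto; lra|].
  eapply Rle_trans; [|apply large_case_arith; auto].
  apply Rmult_le_compat; [lra | apply block_bound_ge0; auto; lra | lra |].
  apply block_bound_le; auto.
Qed.

Lemma abs_exp_sum_le t X Y : 2 * PI < t -> 0 < Y <= X ->
  let tau := t / (2 * PI) in
  abs_exp_sum t X Y <= 2 * A_const * (sqrt tau + 2 * (X / sqrt tau)).
Proof.
  intros Ht HY tau.
  assert (Htau : 1 < tau) by (unfold tau; pose proof PI_RGT_0; apply Rlt_div_r; lra).
  set (r := sqrt tau).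
  assert (Hr : 1 < r) by (unfold r; rewrite <- sqrt_1; apply sqrt_lt_1; lra).
  assert (0 <= X / r) by (apply Rdiv_le_0_compat; lra).
  apply Rle_trans with (27/5 * (r + 2 * (X / r))); [|pose proof A_const_ge; nra].
  rewrite abs_exp_sum_eq. fold tau.
  pose proof (INR_count_int_range X Y ltac:(lra)) as HN.
  pose proof (Zfloor_bound X). pose proof (Zfloor_bound (X + Y)).
  set (N := Z.to_nat (Zfloor (X + Y) - Zfloor X)) in *.
  destruct (Rlt_le_dec X (3/2 * r)) as [Hsmall|Hlarge].
  - eapply Rle_trans; [apply Cmod_csum_e2pi_le|]. lra.
  - destruct (Nat.eq_0_gt_0_cases N) as [HN0|HNpos].
    + rewrite HN0. simpl. rewrite Cmod_0. lra.
    + apply csum_log_phase_le; auto; rewrite plus_IZR; lra.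
Qed.

Theorem proposition18 (alpha t : R) (halpha : 0 < alpha) (ht : 2 * PI < t) :
  let tau := t / (2 * PI) in
  forall s, S_set (Rpower tau alpha) t s ->
    s <= 2 * A_const * (Rpower tau (1/2) + 2 * Rpower tau (alpha - 1/2)).
Proof.
  intros tau s (Y & HY & ->).
  assert (Htau : 0 < tau) by (unfold tau; apply Rdiv_lt_0_compat; pose proof PI_RGT_0; lra).
  assert (Hsqrt : Rpower tau (1/2) = sqrt tau)
    by (rewrite <- Rpower_sqrt by auto; f_equal; field).
  assert (Hshift : Rpower tau (alpha - 1/2) = Rpower tau alpha / sqrt tau)
    by (unfold Rminus; rewrite Rpower_plus, Rpower_Ropp, Hsqrt; reflexivity).
  rewrite Hsqrt, Hshift. apply abs_exp_sum_le; auto.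
Qed.
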